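(* Let $\Sigma=(I,X,\mathcal U,\phi,Y,h)$ be a forward complete control system with outputs which is OOULIM. Then the time bound in OOULIM can be chosen independently of $s$: there exists $\gamma\in\mathcal K_\infty$ such that for all $\varepsilon,r>0$ there is $\tau=\tau(\varepsilon,r)\in I$ such that for all $x\in X$ and all $u\in\mathcal U$ with $\|y(0,x,u)\|_Y<r$ there exists $t\in I$, $t\le\tau$, with $\|y(t,x,u)\|_Y\le\varepsilon+\gamma(\|u\|_{\mathcal U})$.
   Context: Let $I\in\{\mathbb N_0,\mathbb R_0^+\}$. A forward complete control system with outputs $\Sigma=(I,X,\mathcal U,\phi,Y,h)$ consists of: a normed space $(X,\|\cdot\|_X)$; a vector space $U$ and a normed linear subspace $(\mathcal U,\|\cdot\|_{\mathcal U})$ of $\{u:I\to U\}$ such that for all $u\in\mathcal U,\tau\in I$, $u(\cdot+\tau)\in\mathcal U$ with $\|u(\cdot+\tau)\|_{\mathcal U}\le\|u\|_{\mathcal U}$, and for $t_2\ge t_1\ge 0$ the function $u|_{[t_1,t_2]}$ ($u$ on $[t_1,t_2]$, $0$ elsewhere) lies in $\mathcal U$ with norm $\le\|u\|_{\mathcal U}$; a map $\phi:I\times X\times\mathcal U\to X$ with $\phi(0,x,u)=x$, causality, and cocycle property $\phi(t+s,x,u)=\phi(s,\phi(t,x,u),u(t+\cdot))$; a normed space $Y$ and $h:X\times U\to Y$. Write $y(t,x,u)=h(\phi(t,x,u),u(t))$, $B_{s,\mathcal U}=\{u:\|u\|_{\mathcal U}<s\}$, $B_{r,Y}=\{y\in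 Y:\|y\|_Y<r\}$; $\mathcal K_\infty$ = unbounded continuous strictly increasing functions $\mathbb R_0^+\to\mathbb R_0^+$ vanishing at $0$. OOULIM: $\exists\gamma\in\mathcal K_\infty$ such that for all $\varepsilon,r,s>0$ there is $\tau=\tau(\varepsilon,r,s)\in I$ such that for all $x\in X$ and $u\in B_{s,\mathcal U}$ with $y(0,x,u)\in B_{r,Y}$ there exists $t\in I$, $t\le\tau$, with $\|y(t,x,u)\|_Y\le\varepsilon+\gamma(\|u\|_{\mathcal U})$. *)

From HB Require Import structures.
From mathcomp Require Import all_boot all_order all_algebra.
From mathcomp Require Import all_classical all_reals all_analysis.
Set Implicit Arguments. Unset Strict Implicit. Unset Printing Implicit Defensive.
Import Order.TTheory GRing.Theory Num.Theory.
Import numFieldNormedType.Exports.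
Local Open Scope classical_set_scope.
Local Open Scope ring_scope.

(* Time set I: disc = true gives I = N_0 (embedded in R), disc = false gives
   I = R_0^+. *)
Definition inI {R : realType} (disc : bool) (t : R) : Prop :=
  0 <= t /\ (disc -> exists n : nat, t = n%:R).

Definition Tm (R : realType) (disc : bool) := {t : R | inI disc t}.

Lemma inI0 (R : realType) disc : inI disc (0 : R).
Proof. split => //; move=> _; exists 0%N; by []. Qed.

Lemma inID (R : realType) disc (a b : R) : inI disc a -> inI disc b -> inI disc (a + b).
Proof.
move=> [a0 Ha] [b0 Hb]; split; first exact: addr_ge0.
move=> d; have [n ->] := Ha d; have [m ->] := Hb d; exists (n + m)%N.
by rewrite natrD.
Qed.

Definition t0 {R : realType} {disc : bool} : Tm R disc := exist _ 0 (inI0 R disc).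
Definition tadd {R : realType} {disc : bool} (a b : Tm R disc) : Tm R disc :=
  exist _ (sval a + sval b) (inID (proj2_sig a) (proj2_sig b)).

Definition ushift {R : realType} {disc : bool} {U : lmodType R}
  (u : Tm R disc -> U) (tau : Tm R disc) : Tm R disc -> U :=
  fun t => u (tadd t tau).

Definition urestr {R : realType} {disc : bool} {U : lmodType R}
  (u : Tm R disc -> U) (t1 t2 : Tm R disc) : Tm R disc -> U :=
  fun t => if (sval t1 <= sval t) && (sval t <= sval t2) then u t else 0.

Definition normed_subspace {R : realType} {disc : bool} {U : lmodType R}
  (Us : set (Tm R disc -> U)) (nu : (Tm R disc -> U) -> R) : Prop :=
  [/\ Us (fun _ => 0),
      (forall u v, Us u -> Us v -> Us (fun t => u t + v t))
    & (forall (a : R) u, Us u -> Us (fun t => a *: u t))] /\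
  [/\ (forall u, Us u -> 0 <= nu u /\ (nu u = 0 <-> u = (fun _ => 0))),
      (forall (a : R) u, Us u -> nu (fun t => a *: u t) = `|a| * nu u)
    & (forall u v, Us u -> Us v -> nu (fun t => u t + v t) <= nu u + nu v)].

Definition fc_control_system {R : realType} {disc : bool}
  {X : normedModType R} {U : lmodType R}
  (Us : set (Tm R disc -> U)) (nu : (Tm R disc -> U) -> R)
  (phi : Tm R disc -> X -> (Tm R disc -> U) -> X) : Prop :=
  normed_subspace Us nu /\ ([/\
      (forall u tau, Us u -> Us (ushift u tau) /\ nu (ushift u tau) <= nu u),
      (forall u (t1 t2 : Tm R disc), Us u -> sval t1 <= sval t2 ->
          Us (urestr u t1 t2) /\ nu (urestr u t1 t2) <= nu u),
      (forall x u, Us u -> phi t0 x u = x) &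
      (forall t x u v, Us u -> Us v ->
          (forall s : Tm R disc, sval s <= sval t -> u s = v s) ->
          phi t x u = phi t x v)] /\
      (
      (forall t s x u, Us u ->
          phi (tadd t s) x u = phi s (phi t x u) (ushift u t)))).

Definition yout {R : realType} {disc : bool}
  {X : normedModType R} {U : lmodType R} {Y : normedModType R}
  (phi : Tm R disc -> X -> (Tm R disc -> U) -> X) (h : X -> U -> Y)
  (t : Tm R disc) (x : X) (u : Tm R disc -> U) : Y :=
  h (phi t x u) (u t).

(* class K_infinity, for functions R_0^+ -> R_0^+ (represented on R) *)
Definition Kinf {R : realType} (g : R -> R) : Prop :=
  [/\ g 0 = 0,
      (forall a, 0 <= a -> 0 <= g a),
      {within [set x : R | 0 <= x], continuous g},
      (forall a b, 0 <= a -> a < b -> g a < g b)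
    & (forall M, exists a, 0 <= a /\ M < g a)].

Definition OOULIM {R : realType} {disc : bool}
  {X : normedModType R} {U : lmodType R} {Y : normedModType R}
  (Us : set (Tm R disc -> U)) (nu : (Tm R disc -> U) -> R)
  (phi : Tm R disc -> X -> (Tm R disc -> U) -> X) (h : X -> U -> Y) : Prop :=
  exists gamma : R -> R, Kinf gamma /\
    forall eps r s : R, 0 < eps -> 0 < r -> 0 < s ->
    exists tau : Tm R disc, forall (x : X) (u : Tm R disc -> U),
      Us u -> nu u < s -> `|yout phi h t0 x u| < r ->
      exists t : Tm R disc, sval t <= sval tau /\
        `|yout phi h t x u| <= eps + gamma (nu u).

From HB Require Import structures.
From mathcomp Require Import all_boot all_order all_algebra.
From mathcomp Require Import all_classical all_reals all_analysis.
Import Order.TTheory GRing.Theory Num.Theory.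
Import numFieldNormedType.Exports.
Local Open Scope ring_scope.

(* Since gamma is unbounded, there is a level s with gamma(s) > r.  An input
   with norm at least s satisfies the estimate already at t = 0, because
   |y(0)| < r < gamma(|u|); the remaining inputs have norm below s and are
   covered by the OOULIM time tau(eps, r, s). *)

Lemma Tm_ge0 {R : realType} {disc : bool} (t : Tm R disc) : 0 <= sval t.
Proof. by case: (svalP t). Qed.

Lemma Kinf_eventually_gt {R : realType} {g : R -> R} (r : R) :
  Kinf g -> exists s, 0 < s /\ forall v, s <= v -> r < g v.
Proof.
case=> _ _ _ g_mono g_unbounded.
have [a [a_ge0 r_lt_ga]] := g_unbounded r.
exists (a + 1); split=> [|v a1_le_v]; first by rewrite ltr_wpDl.
apply: (lt_trans r_lt_ga); apply: g_mono => //.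
by apply: lt_le_trans a1_le_v; rewrite ltrDl.
Qed.

Theorem lemma10 (R : realType) (disc : bool)
  (X : normedModType R) (U : lmodType R) (Y : normedModType R)
  (Us : set (Tm R disc -> U)) (nu : (Tm R disc -> U) -> R)
  (phi : Tm R disc -> X -> (Tm R disc -> U) -> X) (h : X -> U -> Y)
  (Hsys : fc_control_system Us nu phi)
  (Hoo : OOULIM Us nu phi h) :
  exists gamma : R -> R, Kinf gamma /\
    forall eps r : R, 0 < eps -> 0 < r ->
    exists tau : Tm R disc, forall (x : X) (u : Tm R disc -> U),
      Us u -> `|yout phi h t0 x u| < r ->
      exists t : Tm R disc, sval t <= sval tau /\
        `|yout phi h t x u| <= eps + gamma (nu u).
Proof.
have [gamma [Kgamma ooulim]] := Hoo.
exists gamma; split=> // eps r eps_gt0 r_gt0.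
have [s [s_gt0 gamma_gt_r]] := Kinf_eventually_gt r Kgamma.
have [tau Htau] := ooulim eps r s eps_gt0 r_gt0 s_gt0.
exists tau => x u Us_u y0_lt_r.
have [small_u|large_u] := ltP (nu u) s; first exact: Htau.
exists t0; split; first exact: Tm_ge0.
apply/ltW; apply: (lt_trans y0_lt_r); apply: (lt_le_trans (gamma_gt_r _ large_u)).
by rewrite lerDr ltW.
Qed.
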